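(* Let $Q$ be a quantum circuit acting on $w$ qubits and let $k$ be a positive integer with $k\le w$. Let $R$ be the circuit on $w+1$ qubits, divided into a single-qubit register $\mathsf{O}$ (the first qubit), a $k$-qubit register $\mathsf{Q}$ (whose first qubit is denoted $\mathsf{Q}^{(1)}$) and a $(w-k)$-qubit register $\mathsf{R}$, that performs in order: (1) the $k$-controlled Hadamard $C^k(H)$ with controls $\mathsf{Q}$ and target $\mathsf{O}$, followed by $X$ on each qubit of $\mathsf{Q}$; (2) $Q$ on $(\mathsf{Q},\mathsf{R})$; (3) the controlled-$Z$ on $(\mathsf{O},\mathsf{Q}^{(1)})$; (4) $Q^\dagger$ on $(\mathsf{Q},\mathsf{R})$; (5) $X$ on each qubit of $\mathsf{Q}$, followed by $C^k(H)$ with controls $\mathsf{Q}$ and target $\mathsf{O}$; with $\mathsf{O}$ as output qubit. Then \[1-2^{-k}\bigl(1-(p_{\mathrm{acc}}(Q,k))^2\bigr)\le p_{\mathrm{acc}}(R,1)\le 1-2^{-k}\bigl(1-p_{\mathrm{acc}}(Q,k)\bigr).\]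
   Context: For a circuit $Q$ on $w$ qubits and $1\le k\le w$, $p_{\mathrm{acc}}(Q,k)=\mathrm{tr}\,\Pi_{\mathrm{acc}}Q\rho^{(w,k)}_{\mathrm{init}}Q^\dagger$, where $\rho^{(w,k)}_{\mathrm{init}}=(|0\rangle\langle0|)^{\otimes k}\otimes(I/2)^{\otimes(w-k)}$ and $\Pi_{\mathrm{acc}}=|0\rangle\langle0|\otimes I^{\otimes(w-1)}$; i.e., the first $k$ qubits start clean, the rest maximally mixed, and acceptance means the first qubit is measured as $0$. In $R$, the ordering of qubits is $\mathsf{O},\mathsf{Q},\mathsf{R}$, and $Q$ acting on $(\mathsf{Q},\mathsf{R})$ uses the qubits of $\mathsf{Q}$ as its first $k$ qubits. $C^k(H)$ applies the Hadamard gate to the target iff all $k$ control qubits are $1$; $X$ is the NOT gate and controlled-$Z$ multiplies the phase by $-1$ iff both qubits are $1$. *)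

(* Quantum circuits are modelled by their unitary operators,
   written as matrices indexed by computational-basis labels (bit strings). *)
From HB Require Import structures.
From mathcomp Require Import all_boot all_order all_algebra.
From mathcomp Require Import complex.
From mathcomp Require Import reals.
Set Implicit Arguments. Unset Strict Implicit. Unset Printing Implicit Defensive.
Import Order.TTheory GRing.Theory Num.Theory.
Local Open Scope ring_scope.

Section Ops.
Variable C : numClosedFieldType.

(* computational-basis labels of n qubits; qubit i (0-based) has value x i *)
Definition bits (n : nat) := {ffun 'I_n -> bool}.

(* linear operators on n qubits, as matrices indexed by basis labels:
   op x y = <x| A |y> *)
Definition op (n : nat) := bits n -> bits n -> C.

Definition opmul n (A B : op n) : op n :=
  fun x y => \sum_(z : bits n) A x z * B z y.
Definition opid n : op n := fun x y => (x == y)%:R.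
Arguments opid : clear implicits.
Definition adj n (A : op n) : op n := fun x y => (A y x)^*.
Definition optr n (A : op n) : C := \sum_(x : bits n) A x x.
Definition unitary n (U : op n) : Prop :=
  opmul U (adj U) = opid n /\ opmul (adj U) U = opid n.

(* rho_init^(n,k): first k qubits in |0>, the remaining n-k maximally mixed *)
Definition rho_init n k : op n := fun x y =>
  (x == y)%:R *
  (if [forall i : 'I_n, (val i < k)%N ==> ~~ x i]
   then (2 ^+ (n - k))^-1 else 0).
Arguments rho_init : clear implicits.

(* Pi_acc = |0><0| on the first qubit, identity elsewhere *)
Definition Pi_acc n : op n := fun x y =>
  (x == y)%:R * ([forall i : 'I_n, (val i == 0)%N ==> ~~ x i])%:R.
Arguments Pi_acc : clear implicits.

Definition p_acc n (U : op n) (k : nat) : C :=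
  optr (opmul (Pi_acc n) (opmul U (opmul (rho_init n k) (adj U)))).

(* ---- gates on w+1 qubits: qubit 0 = O, qubits 1..k = Q, k+1..w = R ---- *)

Definition btail w (x : bits w.+1) : bits w := [ffun i => x (lift ord0 i)].

Definition on_QR w (U : op w) : op w.+1 := fun x y =>
  (x ord0 == y ord0)%:R * U (btail x) (btail y).

Definition hadamard (b c : bool) : C :=
  (if b && c then -1 else 1) / sqrtC 2.

Definition flip n (j : 'I_n) (x : bits n) : bits n :=
  [ffun i => if i == j then ~~ x i else x i].
Definition Xgate n (j : 'I_n) : op n := fun x y => (x == flip j y)%:R.

Definition X_Q w (k : nat) : op w.+1 :=
  foldr (fun j A => opmul (Xgate (inord j : 'I_w.+1)) A) (opid w.+1)
        (iota 1 k).
Arguments X_Q : clear implicits.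

Definition CkH w (k : nat) : op w.+1 := fun x y =>
  if [forall i : 'I_w.+1, ((0 < val i) && (val i <= k))%N ==> x i]
  then ([forall i : 'I_w.+1, (val i != 0)%N ==> (x i == y i)])%:R
         * hadamard (x ord0) (y ord0)
  else (x == y)%:R.
Arguments CkH : clear implicits.

Definition CZ_OQ1 w : op w.+1 := fun x y =>
  (x == y)%:R * (if x ord0 && x (inord 1) then -1 else 1).
Arguments CZ_OQ1 : clear implicits.

(* The circuit R (as an operator: later gates multiply on the left). *)
Definition circuitR w k (Q : op w) : op w.+1 :=
  let step1 := opmul (X_Q w k) (CkH w k) in
  let step2 := on_QR Q in
  let step3 := CZ_OQ1 w in
  let step4 := on_QR (adj Q) in
  let step5 := opmul (CkH w k) (X_Q w k) in
  opmul step5 (opmul step4 (opmul step3 (opmul step2 step1))).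

End Ops.

From HB Require Import structures.
From mathcomp Require Import all_boot all_order all_algebra.
From mathcomp Require Import complex.
From mathcomp Require Import reals.
From mathcomp Require Import ring.
Import Order.TTheory GRing.Theory Num.Theory.
Local Open Scope ring_scope.
Set Implicit Arguments. Unset Strict Implicit. Unset Printing Implicit Defensive.

(* Let M = Q^† Pi_acc Q, an orthogonal projector, and let Z be the set of basis
   states of (Q, R) whose Q-register is 0^k, so |Z| = N = 2^(w-k) and
   p_acc(Q, k) = N^-1 \sum_(t in Z) M_tt.  When O = 1 the controlled-Z acts on
   (Q, R), after conjugation by Q, as Q^† (2 Pi_acc - I) Q, and the two Hadamards
   average this with the identity.  Hence on inputs with O = 0 the circuit R is
   the identity unless the Q-register is 1^k, and there (up to the X gates) its
   O = 0 block is M restricted to Z.  This gives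
     p_acc(R, 1) = 1 - 2^-k + 2^-w \sum_(s, t in Z) |M_st|^2.
   As M is a projector, \sum_s |M_st|^2 = M_tt, so the double sum is at most
   \sum_(t in Z) M_tt = N p and at least \sum_(t in Z) M_tt^2 >= N p^2 by
   Cauchy-Schwarz. *)

Section Operators.
Variable C : numClosedFieldType.

Lemma opmulA n (A B D : op C n) : opmul (opmul A B) D = opmul A (opmul B D).
Proof.
apply: boolp.funext => x; apply: boolp.funext => y.
rewrite /opmul; under eq_bigr do rewrite mulr_suml.
rewrite exchange_big /=; apply: eq_bigr => u _.
by rewrite mulr_sumr; apply: eq_bigr => z _; rewrite mulrA.
Qed.

Lemma sum_delta (T : finType) (a : T) (f : T -> C) :
  \sum_(z : T) (z == a)%:R * f z = f a.
Proof.
rewrite (bigD1 a) //= eqxx mul1r big1 ?addr0 // => z /negbTE ->.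
by rewrite mul0r.
Qed.

Lemma sum_delta_sym (T : finType) (a : T) (f : T -> C) :
  \sum_(z : T) (a == z)%:R * f z = f a.
Proof. by under eq_bigr do rewrite eq_sym; rewrite sum_delta. Qed.

Lemma opmul_diagE n (D A : op C n) (f : bits n -> C) :
  (forall x y, D x y = (x == y)%:R * f x) ->
  forall x y, opmul D A x y = f x * A x y.
Proof.
move=> DE x y; rewrite /opmul.
by under eq_bigr do rewrite DE -mulrA; rewrite sum_delta_sym.
Qed.

Lemma opmul_permE n (P A : op C n) (g : bits n -> bits n) :
  involutive g -> (forall x y, P x y = (x == g y)%:R) ->
  forall x y, opmul P A x y = A (g x) y.
Proof.
move=> gK PE x y; rewrite /opmul.
by under eq_bigr => z _ do rewrite PE eq_sym (can2_eq gK gK); rewrite sum_delta.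
Qed.

End Operators.

Lemma sqr_sum_le_card_sum_sqr (F : numFieldType) (T : finType) (P : pred T) (g : T -> F) :
  (forall t, g t \is Num.real) -> 0 < \sum_(t | P t) (1 : F) ->
  (\sum_(t | P t) g t) ^+ 2 <= (\sum_(t | P t) 1) * \sum_(t | P t) g t ^+ 2.
Proof.
move=> g_real N_gt0.
set N := \sum_(t | P t) 1; set S := \sum_(t | P t) g t.
have N_neq0 : N != 0 by rewrite gt_eqF.
pose m := S / N.
have m_real : m \is Num.real.
  by rewrite rpredM ?rpredV ?rpred_sum // => t _; rewrite ?g_real ?real1.
have var_ge0 : 0 <= \sum_(t | P t) (g t - m) ^+ 2.
  by apply: sumr_ge0 => t _; rewrite -real_normK ?rpredB // exprn_ge0.
have varE : \sum_(t | P t) (g t - m) ^+ 2 = \sum_(t | P t) g t ^+ 2 - S ^+ 2 / N.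
  have expand t : (g t - m) ^+ 2 = g t ^+ 2 - (2 * m) * g t + m ^+ 2 * 1 by ring.
  under eq_bigr do rewrite expand.
  rewrite big_split sumrB /= -!mulr_sumr -/N -/S /m.
  by field.
rewrite varE subr_ge0 in var_ge0.
have -> : S ^+ 2 = N * (S ^+ 2 / N) by field.
by rewrite ler_wpM2l // ltW.
Qed.

Definition bcons w (b : bool) (t : bits w) : bits w.+1 :=
  [ffun i => if unlift ord0 i is Some j then t j else b].

Lemma bcons0 w b (t : bits w) : bcons b t ord0 = b.
Proof. by rewrite ffunE unlift_none. Qed.

Lemma bcons_lift w b (t : bits w) j : bcons b t (lift ord0 j) = t j.
Proof. by rewrite ffunE liftK. Qed.

Lemma btail_bcons w b (t : bits w) : btail (bcons b t) = t.
Proof. by apply/ffunP => j; rewrite ffunE bcons_lift. Qed.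

Lemma bconsE w (x : bits w.+1) : bcons (x ord0) (btail x) = x.
Proof.
apply/ffunP => i; case: (unliftP ord0 i) => [j ->|->]; last by rewrite bcons0.
by rewrite bcons_lift ffunE.
Qed.

Lemma bcons_eq w b b' (t t' : bits w) :
  (bcons b t == bcons b' t') = (b == b') && (t == t').
Proof.
apply/eqP/andP => [E|[/eqP-> /eqP->]] //; split; apply/eqP.
  by rewrite -(bcons0 b t) -(bcons0 b' t') E.
by rewrite -(btail_bcons b t) -(btail_bcons b' t') E.
Qed.

Lemma bcons_inord1 w b (t : bits w.+1) : bcons b t (inord 1) = t ord0.
Proof.
have -> : (inord 1 : 'I_w.+2) = lift ord0 ord0 by apply: val_inj; rewrite /= inordK.
by rewrite bcons_lift.
Qed.

Lemma forall_head0 w (x : bits w.+1) :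
  [forall i : 'I_w.+1, (val i == 0)%N ==> ~~ x i] = ~~ x ord0.
Proof.
apply/forallP/idP => [/(_ ord0) //| x0 i].
by apply/implyP => /eqP i0; rewrite (_ : i = ord0) //; apply: val_inj.
Qed.

Definition zeros_head n k (t : bits n) := [forall i : 'I_n, (val i < k)%N ==> ~~ t i].
Definition ones_head n k (t : bits n) := [forall i : 'I_n, (val i < k)%N ==> t i].
Definition flip_head n k (t : bits n) : bits n :=
  [ffun i => if (val i < k)%N then ~~ t i else t i].

Lemma flip_headK n k : involutive (@flip_head n k).
Proof.
by move=> t; apply/ffunP => i; rewrite !ffunE; case: (val i < k)%N; rewrite ?negbK.
Qed.

Lemma ones_head_flip n k (t : bits n) : ones_head k (flip_head k t) = zeros_head k t.
Proof. by apply: eq_forallb => i; rewrite ffunE; case: ifP. Qed.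

Lemma zeros_head0 n (t : bits n) : zeros_head 0 t.
Proof. exact/forallP. Qed.

Lemma zeros_head_bcons n k b (t : bits n) :
  zeros_head k.+1 (bcons b t) = ~~ b && zeros_head k t.
Proof.
apply/forallP/andP => [H|[Hb /forallP H] i].
  split; first by have := H ord0; rewrite bcons0.
  by apply/forallP => j; have := H (lift ord0 j); rewrite bcons_lift.
by case: (unliftP ord0 i) => [j ->|->]; [rewrite bcons_lift; exact: H | rewrite bcons0].
Qed.

Lemma zeros_head1 n (x : bits n.+1) : zeros_head 1 x = ~~ x ord0.
Proof. by rewrite -(bconsE x) zeros_head_bcons zeros_head0 bcons0 andbT. Qed.

Lemma forall_ctrl_bcons w k b (t : bits w) :
  [forall i : 'I_w.+1, ((0 < val i) && (val i <= k))%N ==> bcons b t i] =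
  ones_head k t.
Proof.
apply/forallP/forallP => H j.
  by have := H (lift ord0 j); rewrite bcons_lift; apply.
case: (unliftP ord0 j) => [j' ->|->] //.
by rewrite bcons_lift /= /bump /= add1n; exact: H.
Qed.

Lemma forall_tail_bcons w b b' (t t' : bits w) :
  [forall i : 'I_w.+1, (val i != 0)%N ==> (bcons b t i == bcons b' t' i)] =
  (t == t').
Proof.
apply/forallP/eqP => [H|-> j].
  by apply/ffunP => j; have := H (lift ord0 j); rewrite !bcons_lift => /eqP.
by case: (unliftP ord0 j) => [j' ->|->] //; rewrite !bcons_lift eqxx.
Qed.

Section BitSums.
Variable C : numClosedFieldType.

Lemma sum_bcons w (P : pred (bits w.+1)) (F : bits w.+1 -> C) :
  \sum_(x | P x) F x = \sum_(b : bool) \sum_(t : bits w | P (bcons b t)) F (bcons b t).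
Proof.
rewrite pair_big_dep /=.
rewrite (reindex (fun p : bool * bits w => bcons p.1 p.2)) //=.
exists (fun x : bits w.+1 => (x ord0, btail x)) => [[b t] _|x _] /=.
  by rewrite bcons0 btail_bcons.
by rewrite bconsE.
Qed.

Lemma sum_head0 w (F : bits w.+1 -> C) :
  \sum_(x : bits w.+1 | ~~ x ord0) F x = \sum_(t : bits w) F (bcons false t).
Proof.
rewrite sum_bcons big_bool /= [X in X + _]big_pred0 ?add0r => [|t]; last by rewrite bcons0.
by apply: eq_bigl => t; rewrite bcons0.
Qed.

Lemma card_bits n : \sum_(t : bits n) (1 : C) = 2 ^+ n.
Proof. by rewrite sumr_const card_ffun card_bool card_ord -natrX. Qed.

Lemma card_zeros_head n k :
  \sum_(t : bits n | zeros_head k t) (1 : C) = 2 ^+ (n - k).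
Proof.
elim: n k => [|n IH] [|k].
- by rewrite -(card_bits 0); apply: eq_bigl => t; rewrite zeros_head0.
- by rewrite -(card_bits 0); apply: eq_bigl => t; apply/forallP => -[].
- by rewrite -(card_bits n.+1); apply: eq_bigl => t; rewrite zeros_head0.
rewrite sum_bcons big_bool /= subSS -IH [X in X + _]big_pred0 ?add0r => [|t].
  by apply: eq_bigl => t; rewrite zeros_head_bcons.
by rewrite zeros_head_bcons.
Qed.

Lemma sum_ones_head_flip n k (F : bits n -> C) :
  \sum_(t : bits n | ones_head k t) F (flip_head k t) = \sum_(t | zeros_head k t) F t.
Proof.
rewrite [RHS](reindex_inj (can_inj (@flip_headK n k))) /=.
by apply: eq_bigl => t; rewrite -ones_head_flip flip_headK.
Qed.

Lemma card_not_ones_head n k :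
  \sum_(t : bits n | ~~ ones_head k t) (1 : C) = 2 ^+ n - 2 ^+ (n - k).
Proof.
rewrite -(card_bits n) -card_zeros_head -(sum_ones_head_flip _ (fun=> 1)).
by rewrite (bigID (ones_head k) predT) /= addrAC subrr add0r.
Qed.

End BitSums.

Definition flip_Q w k (x : bits w.+1) : bits w.+1 :=
  bcons (x ord0) (flip_head k (btail x)).

Lemma flip_QK w k : involutive (@flip_Q w k).
Proof. by move=> x; rewrite /flip_Q bcons0 btail_bcons flip_headK bconsE. Qed.

Lemma flipK n (j : 'I_n) : involutive (flip j).
Proof.
by move=> x; apply/ffunP => i; rewrite !ffunE; case: eqP => // _; rewrite negbK.
Qed.

Definition flip_list n (l : seq nat) (y : bits n) : bits n :=
  [ffun i => y i (+) odd (count_mem (val i) l)].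

Section Gates.
Variable C : numClosedFieldType.

Lemma foldr_XgateE w (l : seq nat) : all (fun j => j <= w)%N l ->
  forall x y,
  foldr (fun j A => opmul (@Xgate C w.+1 (inord j)) A) (@opid C w.+1) l x y
  = (x == flip_list l y)%:R.
Proof.
elim: l => [_|j l IH /andP[jw lw]] x y /=.
  by rewrite /opid; congr ((x == _)%:R); apply/ffunP => i; rewrite ffunE addbF.
rewrite (opmul_permE _ (flipK (inord j))) // IH // (can2_eq (flipK _) (flipK _)).
congr ((x == _)%:R); apply/ffunP => i; rewrite !ffunE /=.
have -> : (i == inord j) = (j == val i).
  by rewrite -val_eqE /= inordK ?ltnS // eq_sym.
by case: (j == val i); rewrite /= ?addbN ?add0n.
Qed.

Lemma X_QE w k (x y : bits w.+1) : (k <= w)%N ->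
  @X_Q C w k x y = (x == flip_Q k y)%:R.
Proof.
move=> kw; rewrite /X_Q foldr_XgateE; last first.
  by apply/allP => j; rewrite mem_iota add1n ltnS => /andP[_ /leq_trans]; apply.
congr ((x == _)%:R); apply/ffunP => i.
rewrite ffunE count_uniq_mem ?iota_uniq // mem_iota add1n ltnS -{1}(bconsE y).
case: (unliftP ord0 i) => [j ->|->]; last by rewrite !bcons0 addbF.
rewrite !bcons_lift !ffunE /= /bump /= add1n.
by case: (j < k)%N; rewrite /= ?addbT ?addbF.
Qed.

Lemma opmul_X_Q w k (A : op C w.+1) b s y : (k <= w)%N ->
  opmul (@X_Q C w k) A (bcons b s) y = A (bcons b (flip_head k s)) y.
Proof.
move=> kw; rewrite (opmul_permE _ (@flip_QK w k)) => [|x' y']; last exact: X_QE.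
by rewrite /flip_Q bcons0 btail_bcons.
Qed.

Lemma CkH_bcons w k b b' (s s' : bits w) :
  @CkH C w k (bcons b s) (bcons b' s') =
  if ones_head k s then (s == s')%:R * hadamard C b b'
  else ((b == b') && (s == s'))%:R.
Proof. by rewrite /CkH forall_ctrl_bcons forall_tail_bcons !bcons0 bcons_eq. Qed.

Lemma opmul_CkH w k (A : op C w.+1) b s y :
  opmul (@CkH C w k) A (bcons b s) y =
  if ones_head k s then \sum_(b' : bool) hadamard C b b' * A (bcons b' s) y
  else A (bcons b s) y.
Proof.
rewrite /opmul sum_bcons.
under eq_bigr => b' _ do under eq_bigr => t _ do rewrite CkH_bcons.
case: ifP => _.
  apply: eq_bigr => b' _.
  by under eq_bigr => t _ do rewrite -mulrA; rewrite sum_delta_sym.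
under eq_bigr => b' _ do under eq_bigr => t _ do rewrite -mulnb natrM -mulrA.
by under eq_bigr => b' _ do rewrite -mulr_sumr sum_delta_sym; rewrite sum_delta_sym.
Qed.

Lemma opmul_on_QR w (U : op C w) (A : op C w.+1) b s y :
  opmul (on_QR U) A (bcons b s) y = \sum_(r : bits w) U s r * A (bcons b r) y.
Proof.
rewrite /opmul sum_bcons.
under eq_bigr => b' _ do under eq_bigr => t _ do
  rewrite /on_QR !bcons0 !btail_bcons -mulrA.
by under eq_bigr => b' _ do rewrite -mulr_sumr; rewrite sum_delta_sym.
Qed.

Lemma opmul_CZ w (A : op C w.+2) b s y :
  opmul (@CZ_OQ1 C w.+1) A (bcons b s) y =
  (if b && s ord0 then -1 else 1) * A (bcons b s) y.
Proof. by rewrite (opmul_diagE _ (fun x y => erefl)) bcons0 bcons_inord1. Qed.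

End Gates.

Section Circuit.
Variable C : numClosedFieldType.
Variables (w k : nat) (Q : op C w.+1).
Hypothesis kw : (k <= w.+1)%N.
Hypothesis UQ : unitary Q.

(* the (u, v) entry of Q^† Pi_acc Q *)
Definition acc_proj (u v : bits w.+1) : C :=
  \sum_(r : bits w.+1 | ~~ r ord0) (Q r u)^* * Q r v.

Lemma unitary_cols u v : \sum_(r : bits w.+1) (Q r u)^* * Q r v = (u == v)%:R.
Proof. exact: (congr1 (fun A => A u v) UQ.2). Qed.

(* step (1) maps |0, t> to \sum_b step1_amp t b |b, flip_head k t> *)
Definition step1_amp (t : bits w.+1) (b : bool) : C :=
  if ones_head k t then hadamard C b false else (b == false)%:R.

Lemma step1E b r t :
  opmul (@X_Q C w.+1 k) (@CkH C w.+1 k) (bcons b r) (bcons false t) =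
  (r == flip_head k t)%:R * step1_amp t b.
Proof.
rewrite opmul_X_Q // CkH_bcons /step1_amp.
have [->|ne] := eqVneq r (flip_head k t); first by rewrite flip_headK eqxx !mul1r andbT; case: ifP.
have /negbTE -> : flip_head k r != t by apply: contra ne => /eqP <-; rewrite flip_headK.
by rewrite andbF !mul0r; case: ifP.
Qed.

Lemma steps1to4E b u t :
  opmul (on_QR (adj Q)) (opmul (@CZ_OQ1 C w.+1)
     (opmul (on_QR Q) (opmul (@X_Q C w.+1 k) (@CkH C w.+1 k)))) (bcons b u) (bcons false t)
  = step1_amp t b * (if b then 2 * acc_proj u (flip_head k t) - (u == flip_head k t)%:R
                     else (u == flip_head k t)%:R).
Proof.
have Q_step1 b' r : \sum_(r' : bits w.+1) Q r r' *
    opmul (@X_Q C w.+1 k) (@CkH C w.+1 k) (bcons b' r') (bcons false t) =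
    Q r (flip_head k t) * step1_amp t b'.
  under eq_bigr => r' _ do rewrite step1E mulrCA.
  by rewrite sum_delta mulrC.
rewrite opmul_on_QR.
under eq_bigr do rewrite opmul_CZ opmul_on_QR Q_step1.
case: b => /=; rewrite -unitary_cols.
  rewrite /acc_proj [X in 2 * X]big_mkcond mulr_sumr -sumrB mulr_sumr.
  by apply: eq_bigr => r _; rewrite /adj; case: (r ord0) => /=; ring.
by rewrite mulr_sumr; apply: eq_bigr => r _; rewrite /adj; ring.
Qed.

Lemma circuitR_00E s t :
  circuitR k Q (bcons false s) (bcons false t) =
  if ones_head k t then (ones_head k s)%:R * acc_proj (flip_head k s) (flip_head k t)
  else (s == t)%:R.
Proof.
have had0 b : hadamard C false b = (sqrtC 2)^-1 by rewrite /hadamard mul1r.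
have had10 : hadamard C true false = (sqrtC 2)^-1 by rewrite /hadamard mul1r.
have had2 : (sqrtC 2)^-1 * (sqrtC 2)^-1 = 2^-1 :> C by rewrite -invfM -expr2 sqrtCK.
rewrite /circuitR opmulA opmul_CkH !opmul_X_Q // !steps1to4E big_bool /=.
rewrite !opmul_X_Q // !steps1to4E /= (inj_eq (can_inj (@flip_headK _ k))) /step1_amp.
rewrite !had0 had10.
case As: (ones_head k s); case At: (ones_head k t) => /=.
- rewrite mul1r !mulrA had2 -mulrDr subrK mulrA mulVf ?mul1r //.
  by rewrite pnatr_eq0.
- have /negbTE -> : s != t by apply: contraFN At => /eqP <-.
  by rewrite !mulr0 !mul0r addr0 mulr0.
- have /negbTE -> : s != t by apply: contraFN As => /eqP ->.
  by rewrite mulr0 mul0r.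
- by rewrite mul1r.
Qed.

End Circuit.

Lemma p_accE (C : numClosedFieldType) n (U : op C n.+1) k :
  p_acc U k = (2 ^+ (n.+1 - k))^-1 *
    \sum_(z : bits n.+1 | zeros_head k z) \sum_(x : bits n.+1 | ~~ x ord0) `|U x z| ^+ 2.
Proof.
set c := (2 ^+ (n.+1 - k))^-1.
have rhoE z y : @rho_init C n.+1 k z y = (z == y)%:R * (if zeros_head k z then c else 0).
  by [].
have PiE x y : @Pi_acc C n.+1 x y = (x == y)%:R * (~~ x ord0)%:R.
  by rewrite /Pi_acc forall_head0.
rewrite /p_acc /optr.
under eq_bigr => x _.
  rewrite (opmul_diagE _ PiE) {1}/opmul.
  under eq_bigr => z _ do rewrite (opmul_diagE _ rhoE) /adj mulrCA -normCK.
  over.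
rewrite /= (exchange_big_dep predT) //= mulr_sumr big_mkcond /=.
apply: eq_bigr => x _; rewrite mulrb; case: ifP => _.
  rewrite mul1r mulr_sumr [RHS]big_mkcond; apply: eq_bigr => z _.
  by rewrite andbT; case: ifP; rewrite ?mul0r.
by rewrite mul0r (eq_bigl xpred0) ?big_pred0_eq ?mulr0 // => z; rewrite andbF.
Qed.

Section Projector.
Variable C : numClosedFieldType.
Variables (w : nat) (Q : op C w.+1).
Hypothesis UQ : unitary Q.

Lemma unitary_rows r r' : \sum_(s : bits w.+1) Q r s * (Q r' s)^* = (r == r')%:R.
Proof. exact: (congr1 (fun A => A r r') UQ.1). Qed.

Lemma acc_proj_conj s t : (acc_proj Q s t)^* = acc_proj Q t s.
Proof.
rewrite /acc_proj rmorph_sum; apply: eq_bigr => r _.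
by rewrite rmorphM /= conjCK mulrC.
Qed.

Lemma acc_proj_ge0 t : 0 <= acc_proj Q t t.
Proof. by apply: sumr_ge0 => r _; rewrite -normCKC exprn_ge0. Qed.

Lemma sum_acc_proj_sqr t : \sum_(s : bits w.+1) `|acc_proj Q s t| ^+ 2 = acc_proj Q t t.
Proof.
under eq_bigr do rewrite normCK acc_proj_conj {1}/acc_proj mulr_suml.
rewrite exchange_big /=; apply: eq_bigr => r r0.
have regroup r' s : (Q r s)^* * Q r t * ((Q r' t)^* * Q r' s) =
    Q r t * (Q r' t)^* * (Q r' s * (Q r s)^*) by ring.
under eq_bigr do rewrite /acc_proj mulr_sumr.
rewrite exchange_big /=.
under eq_bigr => r' _ do under eq_bigr => s _ do rewrite regroup.
under eq_bigr => r' _ do rewrite -mulr_sumr unitary_rows.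
rewrite (bigD1 r) //= eqxx mulr1 big1 ?addr0 => [|r' /andP[_ /negbTE ->]].
  exact: mulrC.
exact: mulr0.
Qed.

Lemma sum_zeros_acc_proj_le k t :
  \sum_(s | zeros_head k s) `|acc_proj Q s t| ^+ 2 <= acc_proj Q t t.
Proof.
rewrite -sum_acc_proj_sqr [leRHS](bigID (zeros_head k)) /= lerDl.
by apply: sumr_ge0 => s _; rewrite exprn_ge0.
Qed.

Lemma acc_proj_sqr_le k t : zeros_head k t ->
  acc_proj Q t t ^+ 2 <= \sum_(s | zeros_head k s) `|acc_proj Q s t| ^+ 2.
Proof.
move=> zt; rewrite (bigD1 t) //= ger0_norm ?acc_proj_ge0 // lerDl.
by apply: sumr_ge0 => s _; rewrite exprn_ge0.
Qed.

End Projector.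

Section AcceptanceProbabilities.
Variable C : numClosedFieldType.
Variables (w k : nat) (Q : op C w.+1).
Hypothesis kw : (k <= w.+1)%N.
Hypothesis UQ : unitary Q.

Lemma p_acc_Q :
  p_acc Q k = (2 ^+ (w.+1 - k))^-1 * \sum_(t | zeros_head k t) acc_proj Q t t.
Proof.
rewrite p_accE; congr (_ * _); apply: eq_bigr => t _.
by apply: eq_bigr => r _; rewrite normCK mulrC.
Qed.

Definition acc_block_mass : C :=
  \sum_(t | zeros_head k t) \sum_(s | zeros_head k s) `|acc_proj Q s t| ^+ 2.

Lemma p_acc_circuitR :
  p_acc (circuitR k Q) 1 =
  (2 ^+ w.+1)^-1 * (2 ^+ w.+1 - 2 ^+ (w.+1 - k) + acc_block_mass).
Proof.
have inner t : \sum_(x : bits w.+2 | ~~ x ord0) `|circuitR k Q x (bcons false t)| ^+ 2 =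
    \sum_(s : bits w.+1) `|circuitR k Q (bcons false s) (bcons false t)| ^+ 2.
  exact: sum_head0.
rewrite p_accE subn1 /= (eq_bigl _ _ (@zeros_head1 _)) (@sum_head0 C w.+1).
congr (_ * _); rewrite (bigID (ones_head k)) /= addrC.
under eq_bigr do rewrite inner; under [X in _ + X]eq_bigr do rewrite inner.
congr (_ + _).
  rewrite -card_not_ones_head; apply: eq_bigr => t /negbTE nt.
  under eq_bigr do rewrite circuitR_00E // nt.
  rewrite (bigD1 t) //= eqxx big1 ?addr0 => [|s /negbTE ->].
    by rewrite normr1 expr1n.
  by rewrite normr0 expr0n.
rewrite /acc_block_mass -sum_ones_head_flip; apply: eq_bigr => t ot.
rewrite -(sum_ones_head_flip k (fun s => `|acc_proj Q s (flip_head k t)| ^+ 2)).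
rewrite [RHS]big_mkcond; apply: eq_bigr => s _.
by rewrite circuitR_00E // ot mulr_natl mulrb; case: ifP; rewrite ?normr0 ?expr0n.
Qed.

Lemma acc_block_mass_le : acc_block_mass <= 2 ^+ (w.+1 - k) * p_acc Q k.
Proof.
rewrite p_acc_Q mulrA mulfV ?mul1r ?expf_neq0 ?pnatr_eq0 //.
by apply: ler_sum => t _; apply: sum_zeros_acc_proj_le.
Qed.

Lemma acc_block_mass_ge : 2 ^+ (w.+1 - k) * p_acc Q k ^+ 2 <= acc_block_mass.
Proof.
set N : C := 2 ^+ (w.+1 - k).
have N_gt0 : 0 < N by rewrite exprn_gt0 ?ltr0n.
rewrite -(ler_pM2l N_gt0) mulrA -expr2 -exprMn p_acc_Q mulrA mulfV ?mul1r ?gt_eqF //.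
have diag_le : \sum_(t | zeros_head k t) acc_proj Q t t ^+ 2 <= acc_block_mass.
  by apply: ler_sum => t; apply: acc_proj_sqr_le.
apply: le_trans (ler_wpM2l (ltW N_gt0) diag_le).
rewrite /N -card_zeros_head; apply: sqr_sum_le_card_sum_sqr => [t|].
  exact/ger0_real/acc_proj_ge0.
by rewrite card_zeros_head exprn_gt0 ?ltr0n.
Qed.

End AcceptanceProbabilities.

Unset Implicit Arguments. Set Strict Implicit. Set Printing Implicit Defensive.

Theorem proposition11 (R : realType) (w k : nat) (Q : op (complex R) w) :
  (0 < k)%N -> (k <= w)%N -> unitary Q ->
  1 - (2 ^+ k)^-1 * (1 - (p_acc Q k) ^+ 2) <= p_acc (circuitR k Q) 1 /\
  p_acc (circuitR k Q) 1 <= 1 - (2 ^+ k)^-1 * (1 - p_acc Q k).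
Proof.
case: w Q => [|w] Q k_gt0 kw UQ; first by move: (leq_trans k_gt0 kw).
set N : complex R := 2 ^+ (w.+1 - k).
set A := acc_block_mass k Q.
have N_gt0 : 0 < N by rewrite exprn_gt0 ?ltr0n.
have K_gt0 : (0 : complex R) < 2 ^+ k by rewrite exprn_gt0 ?ltr0n.
have coef_ge0 : 0 <= (2 ^+ k * N)^-1 by rewrite invr_ge0 ltW // mulr_gt0.
have pR : p_acc (circuitR k Q) 1 = 1 - (2 ^+ k)^-1 + (2 ^+ k * N)^-1 * A.
  have split_pow : (2 : complex R) ^+ w.+1 = 2 ^+ k * N by rewrite -exprD subnKC.
  by rewrite p_acc_circuitR // -/N -/A split_pow; field; rewrite !gt_eqF.
have shift x : 1 - (2 ^+ k)^-1 * (1 - x) = 1 - (2 ^+ k)^-1 + (2 ^+ k * N)^-1 * (N * x).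
  by field; rewrite !gt_eqF.
have lower : 1 - (2 ^+ k)^-1 * (1 - p_acc Q k ^+ 2) <= 1 - (2 ^+ k)^-1 + (2 ^+ k * N)^-1 * A.
  by rewrite shift lerD2l ler_wpM2l // acc_block_mass_ge.
have upper : 1 - (2 ^+ k)^-1 + (2 ^+ k * N)^-1 * A <= 1 - (2 ^+ k)^-1 * (1 - p_acc Q k).
  by rewrite shift lerD2l ler_wpM2l // acc_block_mass_le.
by rewrite -pR in lower upper.
Qed.
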